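(* Suppose the user paths $p_1,\dots,p_k$ are pairwise edge-disjoint. Then the set function $A\mapsto\Lambda(A,P)$ on $2^E$ is (1) monotone: $\Lambda(A,P)\le\Lambda(B,P)$ whenever $A\subseteq B\subseteq E$; and (2) submodular: for all $A\subseteq B\subseteq E$ and $e\in E$, $\Lambda(A\cup\{e\},P)-\Lambda(A,P)\ge\Lambda(B\cup\{e\},P)-\Lambda(B,P)$.
   Context: $G=(V,E)$ is a simple directed acyclic graph with capacities $C\in\mathbb{R}_{\ge0}^E$, and $\gamma$ is a budget with $0<\gamma\le\min_eC(e)$. User paths $P=\{p_1,\dots,p_k\}$ are directed paths in $G$ (viewed as edge sets) with initial flow values $\lambda_i\ge0$ such that $\sum_{i:e\in p_i}\lambda_i\le C(e)$ for all $e$. For $A\subseteq E$ let $\tilde C_A(e)=C(e)-\gamma\cdot\mathbf{1}_{\{e\in A\}}$, let $T(A,P)$ be the optimal value of: maximize $\sum_i\tilde\lambda_i$ s.t. $\sum_{i:e\in p_i}\tilde\lambda_i\le\tilde C_A(e)$ for all $e\in E$, $0\le\tilde\lambda_i\le\lambda_i$; and $\Lambda(A,P)=\sum_i\lambda_i-T(A,P)$. *)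

From HB Require Import structures.
From mathcomp Require Import all_boot all_order all_algebra.
From mathcomp Require Import boolp classical_sets reals.
Set Implicit Arguments. Unset Strict Implicit. Unset Printing Implicit Defensive.
Import Order.TTheory GRing.Theory Num.Theory.
Local Open Scope ring_scope.
Local Open Scope classical_set_scope.

Section Defs.
Variable V : finType.

Definition edges (g : rel V) : {set V * V} := [set e | g e.1 e.2].

(* simple: no self loops (parallel edges impossible with a relation);
   acyclic: no nonempty closed directed walk. *)
Definition simple_dag (g : rel V) : Prop :=
  irreflexive g /\
  forall (x : V) (s : seq V), path g x s -> last x s = x -> s = [::].

Definition is_dpath (g : rel V) (p : V * seq V) : Prop := path g p.1 p.2.

Definition path_edges (p : V * seq V) : {set V * V} :=
  [set e | e \in zip (p.1 :: p.2) p.2].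

Variable R : realType.

Definition Ctilde (C : V * V -> R) (gamma : R) (A : {set V * V}) (e : V * V) : R :=
  C e - gamma * (e \in A)%:R.

Variable k : nat.

Definition lp_feasible (g : rel V) (C : V * V -> R) (gamma : R)
  (P : 'I_k -> V * seq V) (lam : 'I_k -> R) (A : {set V * V})
  (lt : 'I_k -> R) : Prop :=
  (forall e, e \in edges g ->
     \sum_(i < k | e \in path_edges (P i)) lt i <= Ctilde C gamma A e) /\
  (forall i, 0 <= lt i <= lam i).

(* T(A,P): optimal value of the LP (supremum of the objective over the
   feasible region, which is nonempty and bounded, hence attained). *)
Definition T_opt (g : rel V) (C : V * V -> R) (gamma : R)
  (P : 'I_k -> V * seq V) (lam : 'I_k -> R) (A : {set V * V}) : R :=
  sup [set t : R | exists lt, lp_feasible g C gamma P lam A lt /\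
                              t = \sum_(i < k) lt i].

Definition Lambda (g : rel V) (C : V * V -> R) (gamma : R)
  (P : 'I_k -> V * seq V) (lam : 'I_k -> R) (A : {set V * V}) : R :=
  \sum_(i < k) lam i - T_opt g C gamma P lam A.

End Defs.

From HB Require Import structures.
From mathcomp Require Import all_boot all_order all_algebra.
From mathcomp Require Import boolp classical_sets reals.
From mathcomp Require Import lra.
Import Order.TTheory GRing.Theory Num.Theory.
Local Open Scope ring_scope.

(* Edge-disjointness decouples the LP: the capacity constraint of an edge on
   p_i involves only lambda~_i, so T(A,P) = sum_i u_A(i) with
   u_A(i) = min(lambda_i, min_{f in p_i, f in A} (C f - gamma)).  Each u_A(i)
   is antitone in A, which gives monotonicity.  Adding e to A replaces u_A(i)
   by min(c_i, u_A(i)) with c_i independent of A, and t - min(c, t) is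
   nondecreasing in t, which gives submodularity. *)

Lemma path_edges_sub {V : finType} {g : rel V} {p : V * seq V} :
  is_dpath g p -> path_edges p \subset edges g.
Proof.
case: p => x s /= ps; apply/fintype.subsetP => e; rewrite !inE /=.
elim: s x ps => [|y s IH] x //= /andP[gxy ps].
by rewrite inE => /orP[/eqP -> // | /(IH _ ps)].
Qed.

Lemma sup_max {R : realType} {E : set R} {x : R} :
  E x -> ubound E x -> sup E = x.
Proof.
by move=> Ex ubx; apply/le_anti; rewrite ge_sup ?ub_le_sup //; exists x.
Qed.

Lemma subr_min_nondecreasing (R : realDomainType) (c : R) :
  {homo (fun x => x - Order.min c x) : x y / x <= y}.
Proof. move=> x y xy; rewrite /Order.min; do 2 case: ifP; lra. Qed.

Section EdgeDisjointPaths.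
Variables (V : finType) (R : realType) (g : rel V) (C : V * V -> R)
  (gamma : R) (k : nat) (P : 'I_k -> V * seq V) (lam : 'I_k -> R).
Hypotheses (gamma_gt0 : 0 < gamma)
  (gamma_le_C : forall e, e \in edges g -> gamma <= C e)
  (P_dpath : forall i, is_dpath g (P i)) (lam_ge0 : forall i, 0 <= lam i)
  (lam_cap : forall e, e \in edges g ->
     \sum_(i < k | e \in path_edges (P i)) lam i <= C e)
  (P_disjoint : forall i j, i != j ->
     [disjoint path_edges (P i) & path_edges (P j)]).
Implicit Types (A B : {set V * V}) (e : V * V) (i j : 'I_k).

Lemma sum_through_edge (F : 'I_k -> R) {e j} : e \in path_edges (P j) ->
  \sum_(i < k | e \in path_edges (P i)) F i = F j.
Proof.
move=> ej; rewrite (bigD1 j) //= big1 ?addr0 // => i /andP[ei nij].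
by have /disjointFl/(_ ej) := P_disjoint _ _ nij; rewrite ei.
Qed.

Definition opt_flow (A : {set V * V}) (i : 'I_k) : R :=
  \big[Order.min/lam i]_(f in path_edges (P i) :&: A) (C f - gamma).

Lemma opt_flow_le_lam A i : opt_flow A i <= lam i.
Proof. exact: bigmin_le_id. Qed.

Lemma opt_flow_ge0 A i : 0 <= opt_flow A i.
Proof.
apply/bigmin_geP; split => // f; rewrite inE => /andP[fp _].
rewrite subr_ge0 gamma_le_C //.
exact: fintype.subsetP (path_edges_sub (P_dpath i)) _ fp.
Qed.

Lemma opt_flow_antitone A B i : A \subset B -> opt_flow B i <= opt_flow A i.
Proof.
move=> AB; apply/bigmin_geP; split=> [|f]; first exact: opt_flow_le_lam.
rewrite inE => /andP[fp fA]; apply: bigmin_le_cond.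
by rewrite inE fp (fintype.subsetP AB).
Qed.

Lemma opt_flow_setU1 A e i : opt_flow (e |: A) i =
  Order.min (if e \in path_edges (P i) then C e - gamma else lam i)
            (opt_flow A i).
Proof.
rewrite /opt_flow finset.setIUr bigminU -/(opt_flow A i).
have min_absorb_lam x : Order.min (Order.min x (lam i)) (opt_flow A i) =
                  Order.min x (opt_flow A i).
  by rewrite -minA (min_r (opt_flow_le_lam A i)).
case: ifP => ep.
  by rewrite (finset.setIidPr _) ?finset.sub1set // bigmin_set1 min_absorb_lam.
by rewrite finset.disjoint_setI0 ?big_set0 // disjoint_sym disjoints1 ep.
Qed.

Lemma opt_flow_feasible A : lp_feasible g C gamma P lam A (opt_flow A).
Proof.
split=> [e eg|i]; last by rewrite opt_flow_ge0 opt_flow_le_lam.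
rewrite /Ctilde.
have [[j ej]|none] := pselect (exists j, e \in path_edges (P j)).
  rewrite (sum_through_edge _ ej); case: (boolP (e \in A)) => eA.
    by rewrite mulr1; apply: bigmin_le_cond; rewrite inE ej eA.
  rewrite mulr0 subr0 (le_trans (opt_flow_le_lam A j)) //.
  by rewrite -(sum_through_edge lam ej) lam_cap.
rewrite big_pred0 => [|i]; last first.
  by apply/negbTE/negP => ei; apply: none; exists i.
have C_ge_gamma := gamma_le_C _ eg.
case: (e \in A); rewrite ?mulr1 ?mulr0 ?subr0 ?subr_ge0 //.
exact: le_trans (ltW gamma_gt0) C_ge_gamma.
Qed.

Lemma feasible_sum_le_opt_flow A lt : lp_feasible g C gamma P lam A lt ->
  \sum_(i < k) lt i <= \sum_(i < k) opt_flow A i.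
Proof.
move=> [cap bnd]; apply: ler_sum => i _; apply/bigmin_geP; split.
  by case/andP: (bnd i).
move=> f; rewrite inE => /andP[fp fA].
have := cap f (fintype.subsetP (path_edges_sub (P_dpath i)) _ fp).
by rewrite (sum_through_edge _ fp) /Ctilde fA mulr1.
Qed.

Lemma T_opt_opt_flow A : T_opt g C gamma P lam A = \sum_(i < k) opt_flow A i.
Proof.
apply: sup_max.
  by exists (opt_flow A); split=> //; exact: opt_flow_feasible.
by move=> _ [lt [lt_feas ->]]; exact: feasible_sum_le_opt_flow.
Qed.

Lemma Lambda_opt_flow A :
  Lambda g C gamma P lam A = \sum_(i < k) (lam i - opt_flow A i).
Proof. by rewrite /Lambda T_opt_opt_flow sumrB. Qed.

Lemma Lambda_setU1_sub A e :
  Lambda g C gamma P lam (e |: A) - Lambda g C gamma P lam A =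
  \sum_(i < k) (opt_flow A i - opt_flow (e |: A) i).
Proof. rewrite !Lambda_opt_flow -sumrB; apply: eq_bigr => i _; lra. Qed.

Lemma Lambda_monotone A B : A \subset B ->
  Lambda g C gamma P lam A <= Lambda g C gamma P lam B.
Proof.
move=> AB; rewrite !Lambda_opt_flow; apply: ler_sum => i _.
by rewrite lerD2l lerN2 opt_flow_antitone.
Qed.

Lemma Lambda_submodular A B e : A \subset B ->
  Lambda g C gamma P lam (e |: B) - Lambda g C gamma P lam B <=
  Lambda g C gamma P lam (e |: A) - Lambda g C gamma P lam A.
Proof.
move=> AB; rewrite !Lambda_setU1_sub; apply: ler_sum => i _.
by rewrite !opt_flow_setU1; apply/subr_min_nondecreasing/opt_flow_antitone.
Qed.

End EdgeDisjointPaths.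

Theorem lemma1 (V : finType) (R : realType) (g : rel V) (C : V * V -> R)
  (gamma : R) (k : nat) (P : 'I_k -> V * seq V) (lam : 'I_k -> R) :
  simple_dag g ->
  (forall e, e \in edges g -> 0 <= C e) ->
  0 < gamma ->
  (forall e, e \in edges g -> gamma <= C e) ->
  (forall i, is_dpath g (P i)) ->
  (forall i, 0 <= lam i) ->
  (forall e, e \in edges g ->
     \sum_(i < k | e \in path_edges (P i)) lam i <= C e) ->
  (* pairwise edge-disjoint user paths *)
  (forall i j, i != j -> [disjoint path_edges (P i) & path_edges (P j)]) ->
  (* (1) monotone *)
  (forall A B : {set V * V}, A \subset B -> B \subset edges g ->
     Lambda g C gamma P lam A <= Lambda g C gamma P lam B) /\
  (* (2) submodular *)
  (forall (A B : {set V * V}) (e : V * V),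
     A \subset B -> B \subset edges g -> e \in edges g ->
     Lambda g C gamma P lam (e |: A) - Lambda g C gamma P lam A >=
     Lambda g C gamma P lam (e |: B) - Lambda g C gamma P lam B).
Proof.
move=> _ _ gamma_gt0 gamma_le_C P_dpath lam_ge0 lam_cap P_disjoint.
split=> [A B AB _ | A B e AB _ _].
  exact: Lambda_monotone.
exact: Lambda_submodular.
Qed.
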